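(* Let $2 \leq d \leq k$ be integers, let $\Sigma_k=\{\sigma_1,\ldots,\sigma_k\}$ and $\Sigma_d=\{\sigma_1,\ldots,\sigma_d\}$. Consider two users over the alphabet $\Sigma_k$, where user 1 has confusion graph $G_1=(\Sigma_k,\{ab \mid a\in\Sigma_k,\ b\in\Sigma_k\setminus\Sigma_d,\ a\neq b\})$ (the complete graph on $\Sigma_k$ minus a clique on $\Sigma_d$) and user 2 has the empty confusion graph $G_2=(\Sigma_k,\emptyset)$. Then for every $\alpha\in[0,1]$ the rate vector $(\alpha\log_2 d,\ (1-\alpha)\log_2 k)$ is optimal.
   Context: Setting: a sender broadcasts a word of length $n$ over a finite alphabet $\Sigma$ to $r$ users; user $i$ has a confusion graph $G_i$ on vertex set $\Sigma$, where $ab$ is an edge iff user $i$ cannot distinguish letters $a$ and $b$. Two words $x,y\in\Sigma^n$ are distinguishable by user $i$ if there is a coordinate $t$ with $x_t\neq y_t$ and $x_ty_t$ not an edge of $G_i$. A vector $(m_1,\ldots,m_r)$ of positive integers is feasible for length $n$ if there is a map $E:[m_1]\times\cdots\times[m_r]\to\Sigma^n$ such that for every $i$ and all tuples $a,a'$ with $a_i\neq a'_i$, the words $E(a)$ and $E(a')$ are distinguishable by user $i$ (so user $i$ can decode his message $a_i$). A rate vector $(R_1,\ldots,R_r)$ is feasible if there is a sequence of feasible vectors $(m_1^{(n)},\ldots,m_r^{(n)})$ for lengths $n\to\infty$ with $R_i=\lim_{n\to\infty}\frac{\log_2 m_i^{(n)}}{n}$ for all $i$. For two users, a rate vector is optimal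 if it is feasible and no user can increase his rate while the other user keeps the same rate (i.e. no feasible $(R_1',R_2)$ with $R_1'>R_1$ and no feasible $(R_1,R_2')$ with $R_2'>R_2$). *)

From Stdlib Require Import Reals.
From mathcomp Require Import all_boot.

Set Implicit Arguments.
Unset Strict Implicit.
Unset Printing Implicit Defensive.

(* Alphabet Sigma_k = 'I_k (letter sigma_{i+1} is the ordinal i).
   A confusion graph is a relation on the alphabet (ab edge iff G a b). *)

Definition word (k n : nat) := 'I_n -> 'I_k.

Definition distinguishable (k : nat) (G : rel 'I_k) (n : nat) (x y : word k n) : Prop :=
  exists t : 'I_n, x t <> y t /\ ~~ G (x t) (y t).

Definition feasible2 (k : nat) (G1 G2 : rel 'I_k) (n m1 m2 : nat) : Prop :=
  (0 < m1)%N /\ (0 < m2)%N /\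
  exists E : 'I_m1 -> 'I_m2 -> word k n,
    (forall (a1 a1' : 'I_m1) (a2 a2' : 'I_m2),
        a1 <> a1' -> distinguishable G1 (E a1 a2) (E a1' a2')) /\
    (forall (a1 a1' : 'I_m1) (a2 a2' : 'I_m2),
        a2 <> a2' -> distinguishable G2 (E a1 a2) (E a1' a2')).

Definition log2 (x : R) : R := Rdiv (ln x) (ln 2).

Definition rate_feasible2 (k : nat) (G1 G2 : rel 'I_k) (R1 R2 : R) : Prop :=
  exists m1 m2 : nat -> nat,
    (forall n, feasible2 G1 G2 n (m1 n) (m2 n)) /\
    Un_cv (fun n => Rdiv (log2 (INR (m1 n))) (INR n)) R1 /\
    Un_cv (fun n => Rdiv (log2 (INR (m2 n))) (INR n)) R2.

Definition rate_optimal2 (k : nat) (G1 G2 : rel 'I_k) (R1 R2 : R) : Prop :=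
  rate_feasible2 G1 G2 R1 R2 /\
  ~ (exists R1' : R, Rgt R1' R1 /\ rate_feasible2 G1 G2 R1' R2) /\
  ~ (exists R2' : R, Rgt R2' R2 /\ rate_feasible2 G1 G2 R1 R2').

(* G1 = complete graph on Sigma_k minus a clique on Sigma_d:
   ab is an edge iff a <> b and one of a, b lies outside Sigma_d
   (i.e. has index >= d). *)
Definition G_minus_clique (d k : nat) : rel 'I_k :=
  fun a b => (a != b) && ((d <= a)%N || (d <= b)%N).

Definition G_empty (k : nat) : rel 'I_k := fun _ _ => false.

Arguments G_minus_clique d k : clear implicits.
Arguments G_empty k : clear implicits.

(* The rates are achieved by writing the message of user 1 over Sigma_d on the first
   floor(alpha n) positions and that of user 2 over Sigma_k on the remaining ones.
   For optimality put b = log d / log k, so that k ^ b = d.  Call a word z over Sigma_d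
   consistent with a word x over Sigma_k if they agree wherever x uses a letter of
   Sigma_d.  User 1 decodes only if no z is consistent with codewords of two different
   messages, and user 2 only if the m2 codewords carrying a fixed message of user 1 are
   distinct.  Splitting words by their first letter and using the concavity of y ^ b,
   induction on the length shows that N distinct words of Sigma_k^n have at least N ^ b
   consistent words in Sigma_d^n.  Hence m1 * m2 ^ b <= d ^ n, i.e.
   R1 / log d + R2 / log k <= 1. *)

From HB Require Import structures.
From Stdlib Require Import Reals Lra Lia ZArith.
From mathcomp Require Import all_boot.

Set Implicit Arguments.
Unset Strict Implicit.

Section ConsistentWords.
Variables d k : nat.

Definition consistent (x z : seq nat) := all2 (fun c e => (d <= c) || (c == e)) x z.

Fixpoint cube n : seq (seq nat) :=
  if n is n'.+1 then [seq e :: z | e <- iota 0 d, z <- cube n'] else [:: [::]].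

Definition nshadow (S : seq (seq nat)) n := count (fun z => has (consistent^~ z) S) (cube n).

Definition ndistinct (S : seq (seq nat)) := size (undup S).

Definition tails_at c S := [seq behead x | x <- S & head 0 x == c].

Definition consistent_tails e S := [seq behead x | x <- S & (d <= head 0 x) || (head 0 x == e)].

Definition is_word n (x : seq nat) := (size x == n) && all (fun c => c < k) x.

Lemma size_cube n : size (cube n) = d ^ n.
Proof. by elim: n => //= n IHn; rewrite size_allpairs size_iota IHn expnS. Qed.

Lemma nshadow_cons n S : (forall x, x \in S -> size x = n.+1) ->
  nshadow S n.+1 = \sum_(0 <= e < d) nshadow (consistent_tails e S) n.
Proof.
move=> size_S; rewrite /nshadow /= count_flatten -map_comp sumnE big_map /index_iota subn0.
apply: eq_bigr => e _ /=; rewrite count_map; apply: eq_count => z /=.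
elim: S size_S => //= x S IHS size_S.
rewrite IHS; last by move=> y y_S; apply: size_S; rewrite inE y_S orbT.
move: (size_S x (mem_head _ _)); clear size_S IHS.
by case: x => //= c x _; rewrite /consistent_tails /=; case: ifP.
Qed.

Lemma ndistinct_le_sum_tails n S : (forall x, x \in S -> is_word n.+1 x) ->
  ndistinct S <= \sum_(0 <= c < k) ndistinct (tails_at c S).
Proof.
move=> word_S.
have sub_S : {subset undup S <= [seq c :: t | c <- iota 0 k, t <- undup (tails_at c S)]}.
  move=> x; rewrite mem_undup => x_S; move: (word_S x x_S).
  case: x x_S => [|c t] // x_S /andP[_ /andP[lt_ck _]].
  apply/allpairsPdep; exists c, t; rewrite mem_iota lt_ck mem_undup; split => //.
  by apply/mapP; exists (c :: t); rewrite // mem_filter eqxx.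
apply: leq_trans (uniq_leq_size (undup_uniq S) sub_S) _.
by rewrite size_allpairs_dep sumnE big_map /index_iota subn0.
Qed.

Lemma ndistinct_tails_le c e S : (c == e) || (d <= c) ->
  ndistinct (tails_at c S) <= ndistinct (consistent_tails e S).
Proof.
move=> ce; apply: uniq_leq_size (undup_uniq _) _ => y.
rewrite !mem_undup => /mapP[x]; rewrite mem_filter => /andP[/eqP hx x_S] ->.
apply: map_f; rewrite mem_filter x_S andbT hx.
by case/orP: ce => [/eqP ->|->]; rewrite ?eqxx ?orbT.
Qed.

Lemma is_word_consistent_tails n e S : (forall x, x \in S -> is_word n.+1 x) ->
  forall y, y \in consistent_tails e S -> is_word n y.
Proof.
move=> word_S y /mapP[x]; rewrite mem_filter => /andP[_ /word_S] + ->.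
by case: x => //= c x /andP[/eqP[<-]] /andP[_ all_x]; rewrite /is_word eqxx.
Qed.
End ConsistentWords.

Lemma consistent_nth d x z i : consistent d x z -> (i < size x) -> (nth 0 x i < d) ->
  nth 0 z i = nth 0 x i.
Proof.
elim: x z i => [|c x IHx] [|e z] i //= /andP[ce xz].
case: i => [|i] /=; last by rewrite ltnS; exact: IHx.
by move=> _ lt_cd; move: ce; rewrite leqNgt lt_cd => /eqP.
Qed.

Lemma sum_count_disjoint (T : finType) (P : T -> pred (seq nat)) (L : seq (seq nat)) :
  (forall z a a', a != a' -> P a z -> P a' z -> False) ->
  \sum_(a : T) count (P a) L <= size L.
Proof.
move=> disj; elim: L => [|z L IHL] /=; first by rewrite big1.
rewrite big_split /= addnC -addn1 leq_add //.
case: (pickP (P^~ z)) => [a0 Pa0|noP]; last by rewrite big1 // => a _; rewrite noP.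
rewrite (bigD1 a0) //= Pa0 big1 // => a ne_a.
by case Pa: (P a z) => //; case: (disj z a a0 ne_a Pa Pa0).
Qed.

Definition letters k n (w : word k n) : seq nat := [seq val (w t) | t <- enum 'I_n].

Lemma size_letters k n (w : word k n) : size (letters w) = n.
Proof. by rewrite size_map size_enum_ord. Qed.

Lemma nth_letters k n (w : word k n) (t : 'I_n) : nth 0 (letters w) t = val (w t).
Proof. by rewrite (nth_map t) ?size_enum_ord // nth_ord_enum. Qed.

Lemma is_word_letters k n (w : word k n) : is_word k n (letters w).
Proof.
rewrite /is_word size_letters eqxx; apply/allP => c /mapP[t _ ->]; exact: ltn_ord.
Qed.

Lemma card_ffun_ord a d : #|{ffun 'I_a -> 'I_d}| = d ^ a.
Proof. by rewrite card_ffun !card_ord. Qed.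

Definition ffun_of_ord a d (i : 'I_(d ^ a)) : {ffun 'I_a -> 'I_d} :=
  enum_val (cast_ord (esym (card_ffun_ord a d)) i).

Lemma ffun_of_ord_inj a d : injective (@ffun_of_ord a d).
Proof. by move=> i j /enum_val_inj /cast_ord_inj. Qed.

Lemma ffun_of_ord_neq a d (i j : 'I_(d ^ a)) :
  i <> j -> exists t, ffun_of_ord i t != ffun_of_ord j t.
Proof.
move=> ne_ij; apply/existsP; rewrite -negb_forall; apply/negP => /forallP eq_ij.
by apply/ne_ij/ffun_of_ord_inj/ffunP => t; apply/eqP.
Qed.

Lemma feasible_split d k n a : 0 < d -> d <= k -> a <= n ->
  feasible2 (G_minus_clique d k) (G_empty k) n (d ^ a) (k ^ (n - a)).
Proof.
move=> d_gt0 le_dk le_an.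
have k_gt0 : 0 < k := leq_trans d_gt0 le_dk.
have n_a := subnKC le_an.
pose pos (t : 'I_n) := split (cast_ord (esym n_a) t).
have pos_l i : pos (cast_ord n_a (lshift (n - a) i)) = inl i.
  by rewrite /pos cast_ordK (unsplitK (inl i)).
have pos_r j : pos (cast_ord n_a (rshift a j)) = inr j.
  by rewrite /pos cast_ordK (unsplitK (inr j)).
have small (x : 'I_d) : (d <= widen_ord le_dk x) = false.
  by rewrite /= leqNgt ltn_ord.
split; first by rewrite expn_gt0 d_gt0.
split; first by rewrite expn_gt0 k_gt0.
exists (fun a1 a2 t => match pos t with
  | inl i => widen_ord le_dk (ffun_of_ord a1 i)
  | inr j => ffun_of_ord a2 j end).
split=> a1 a1' a2 a2'.
- case/ffun_of_ord_neq=> i ne_i; exists (cast_ord n_a (lshift (n - a) i)).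
  rewrite pos_l; split.
    by move=> /(congr1 val) eq_i; move/eqP: ne_i; apply; apply: val_inj.
  by rewrite /G_minus_clique !small andbF.
- case/ffun_of_ord_neq=> j ne_j; exists (cast_ord n_a (rshift a j)).
  by rewrite pos_r; split=> // /eqP; rewrite (negbTE ne_j).
Qed.

HB.instance Definition _ := Monoid.isComLaw.Build R R0 Rplus
  (fun x y z => esym (Rplus_assoc x y z)) Rplus_comm Rplus_0_l.

Open Scope R_scope.

Lemma INR_addn m n : INR (m + n)%N = INR m + INR n.
Proof. exact: plus_INR. Qed.

Lemma INR_muln m n : INR (m * n)%N = INR m * INR n.
Proof. exact: mult_INR. Qed.

Lemma INR_subn m n : (n <= m)%N -> INR (m - n)%N = INR m - INR n.
Proof. by move/leP; apply: minus_INR. Qed.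

Lemma INR_expn m n : INR (m ^ n)%N = INR m ^ n.
Proof. by elim: n => //= n IHn; rewrite expnS INR_muln IHn. Qed.

Lemma INR_leq m n : (m <= n)%N -> INR m <= INR n.
Proof. by move/leP; apply: le_INR. Qed.

Lemma INR_sum (I : Type) (r : seq I) (P : pred I) (g : I -> nat) :
  INR (\sum_(i <- r | P i) g i)%N = \big[Rplus/0]_(i <- r | P i) INR (g i).
Proof. exact: (big_morph INR INR_addn). Qed.

Lemma Rsum_le (I : Type) (r : seq I) (P : pred I) (f g : I -> R) :
  (forall i, P i -> f i <= g i) ->
  \big[Rplus/0]_(i <- r | P i) f i <= \big[Rplus/0]_(i <- r | P i) g i.
Proof. by move=> le_fg; apply: (big_ind2 Rle) => //; [lra | move=> *; lra]. Qed.

Lemma Rsum_const_ord m c : \big[Rplus/0]_(i < m) c = INR m * c.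
Proof. by rewrite big_const_ord; elim: m => [|m IHm]; rewrite ?S_INR /= ?IHm; ring. Qed.

Lemma ln_le_sub1 z : 0 < z -> ln z <= z - 1.
Proof. by move=> z_gt0; have := exp_ineq1_le (ln z); rewrite exp_ln //; lra. Qed.

Lemma exp_le x y : x <= y -> exp x <= exp y.
Proof. by case=> [/exp_increasing|->]; lra. Qed.

Lemma ln_le x y : 0 < x -> x <= y -> ln x <= ln y.
Proof. by move=> x_gt0 [/(ln_increasing _ _ x_gt0)|->]; lra. Qed.

Section PowerFunction.
Variable b : R.
Hypotheses (b_gt0 : 0 < b) (b_le1 : b <= 1).

(* [Rpower 0 b] is [exp (b * ln 0) = 1], so the value at [0] is set by hand. *)
Definition rpow (x : R) : R := if Rlt_dec 0 x then Rpower x b else 0.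

Lemma rpow_pos x : 0 < x -> rpow x = Rpower x b.
Proof. by rewrite /rpow; case: Rlt_dec. Qed.

Lemma rpow0 : rpow 0 = 0.
Proof. by rewrite /rpow; case: Rlt_dec => // h; lra. Qed.

Lemma rpow1 : rpow 1 = 1.
Proof. by rewrite rpow_pos /Rpower ?ln_1 ?Rmult_0_r ?exp_0 //; lra. Qed.

Lemma rpow_ge0 x : 0 <= rpow x.
Proof. by rewrite /rpow; case: Rlt_dec => h /=; [left; apply: exp_pos | lra]. Qed.

Lemma rpow_le x y : 0 <= x -> x <= y -> rpow x <= rpow y.
Proof.
move=> [x_gt0|<-] le_xy; last by rewrite rpow0; apply: rpow_ge0.
rewrite !rpow_pos; try lra; apply: Rle_Rpower_l; lra.
Qed.

Lemma rpowM x y : 0 <= x -> 0 <= y -> rpow (x * y) = rpow x * rpow y.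
Proof.
move=> [x_gt0|<-]; last by rewrite Rmult_0_l rpow0 Rmult_0_l.
move=> [y_gt0|<-]; last by rewrite Rmult_0_r rpow0 Rmult_0_r.
rewrite !rpow_pos; try nra; exact: esym (Rpower_mult_distr _ _ _ x_gt0 y_gt0).
Qed.

(* Weighted AM-GM for the weights [b] and [1 - b], through [ln z <= z - 1]. *)
Lemma rpow_le_tangent1 y : 0 <= y -> rpow y <= 1 + b * (y - 1).
Proof.
move=> [y_gt0|<-]; last by rewrite rpow0; lra.
set c := 1 + b * (y - 1); have c_gt0 : 0 < c by rewrite /c; nra.
have ic_gt0 : 0 < / c by apply: Rinv_0_lt_compat.
have ln_yc := ln_le_sub1 (Rmult_lt_0_compat _ _ y_gt0 ic_gt0).
have ln_c := ln_le_sub1 ic_gt0.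
rewrite ln_mult // ln_Rinv // in ln_yc; rewrite ln_Rinv // in ln_c.
have weights : b * (y * / c - 1) + (1 - b) * (/ c - 1) = 0 by rewrite /c; field; rewrite -/c; lra.
have le_ln : b * ln y <= ln c by nra.
rewrite rpow_pos // /Rpower -(exp_ln c) //; exact: exp_le.
Qed.

Lemma rpow_le_tangent c y : 0 < c -> 0 <= y -> rpow y <= rpow c * (1 + b * (y / c - 1)).
Proof.
move=> c_gt0 y_ge0.
have y_c : y = c * (y / c) by field; lra.
have yc_ge0 : 0 <= y / c by apply: Rmult_le_pos; [lra | left; apply: Rinv_0_lt_compat].
rewrite {1}y_c rpowM; try lra.
apply: Rmult_le_compat_l; [exact: rpow_ge0 | exact: rpow_le_tangent1].
Qed.

Lemma rpow_concave l x y : 0 <= l <= 1 -> 0 <= x -> 0 <= y ->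
  l * rpow x + (1 - l) * rpow y <= rpow (l * x + (1 - l) * y).
Proof.
move=> l01 x_ge0 y_ge0; set c := l * x + (1 - l) * y.
have [c_gt0|c0] : 0 < c \/ c = 0 by rewrite /c; nra.
- have Tx := rpow_le_tangent c_gt0 x_ge0; have Ty := rpow_le_tangent c_gt0 y_ge0.
  have : l * rpow x + (1 - l) * rpow y <=
         rpow c * (l * (1 + b * (x / c - 1)) + (1 - l) * (1 + b * (y / c - 1))) by nra.
  suff -> : l * (1 + b * (x / c - 1)) + (1 - l) * (1 + b * (y / c - 1)) = 1 by lra.
  by rewrite /c; field; rewrite -/c; lra.
- have lx : l * rpow x = 0.
    have [->|->] : l = 0 \/ x = 0 by rewrite /c in c0; nra.
    + exact: Rmult_0_l.
    + by rewrite rpow0 Rmult_0_r.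
  have ly : (1 - l) * rpow y = 0.
    have [->|->] : 1 - l = 0 \/ y = 0 by rewrite /c in c0; nra.
    + exact: Rmult_0_l.
    + by rewrite rpow0 Rmult_0_r.
  by rewrite lx ly c0 rpow0; lra.
Qed.

(* [t] and [A + M] are the convex combinations of [M] and [A + t] with swapped weights. *)
Lemma rpow_increment A M t : 0 <= A -> 0 <= M -> M <= t ->
  rpow (A + t) + rpow M <= rpow t + rpow (A + M).
Proof.
move=> A_ge0 M_ge0 le_Mt.
have [L_gt0|L0] : 0 < A + t - M \/ A + t - M = 0 by lra.
- set l := A / (A + t - M).
  have lL : l * (A + t - M) = A by rewrite /l; field; lra.
  have l01 : 0 <= l <= 1 by split; nra.
  have At_ge0 : 0 <= A + t by lra.
  have C1 := rpow_concave l01 M_ge0 At_ge0.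
  have C2 := rpow_concave l01 At_ge0 M_ge0.
  rewrite (_ : l * M + (1 - l) * (A + t) = t) in C1; last by rewrite /l; field; lra.
  rewrite (_ : l * (A + t) + (1 - l) * M = A + M) in C2; last by rewrite /l; field; lra.
  lra.
- have [-> ->] : A = 0 /\ t = M by lra.
  by rewrite Rplus_0_l; lra.
Qed.

(* The induction lowers the [u e] to [M] one at a time, each step by [rpow_increment]. *)
Lemma rpow_sum_sub_le n C M (u : nat -> R) :
  0 <= C -> 0 <= M -> (forall e, (e < n)%N -> M <= u e) ->
  rpow (\big[Rplus/0]_(0 <= e < n) u e + C) - \big[Rplus/0]_(0 <= e < n) rpow (u e)
  <= rpow (INR n * M + C) - INR n * rpow M.
Proof.
elim: n C => [|n IHn] C C_ge0 M_ge0 le_Mu; first by rewrite !big_nil /= !Rmult_0_l; lra.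
rewrite S_INR !big_nat_recr //=.
set U := \big[Rplus/0]_(0 <= e < n) u e.
have U_ge0 : 0 <= U.
  rewrite /U big_seq; apply: big_ind => [|x y|e]; try lra.
  by rewrite mem_index_iota => /andP[_ /leqW /le_Mu]; lra.
have incr := rpow_increment (A := U + C) ltac:(lra) M_ge0 (le_Mu n (ltnSn n)).
have IH := IHn (C + M) ltac:(lra) M_ge0 (fun e lt_en => le_Mu e (leqW lt_en)).
rewrite -/U (_ : U + (C + M) = U + C + M) in IH; last by ring.
rewrite (_ : INR n * M + (C + M) = (INR n + 1) * M + C) in IH; last by ring.
rewrite (_ : U + u n + C = U + C + u n); [lra | ring].
Qed.

Lemma rpow_sum_pad_le n K M (u : nat -> R) :
  rpow K = INR n -> INR n <= K -> 0 <= M -> (forall e, (e < n)%N -> M <= u e) ->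
  rpow (\big[Rplus/0]_(0 <= e < n) u e + (K - INR n) * M)
  <= \big[Rplus/0]_(0 <= e < n) rpow (u e).
Proof.
move=> rpowK le_nK M_ge0 le_Mu.
have := rpow_sum_sub_le (C := (K - INR n) * M) ltac:(nra) M_ge0 le_Mu.
have n_ge0 := pos_INR n.
rewrite (_ : INR n * M + (K - INR n) * M = K * M) ?rpowM ?rpowK; lra.
Qed.
End PowerFunction.

Section ShadowBound.
Variables (d k : nat) (b : R).
Hypotheses (b_gt0 : 0 < b) (b_le1 : b <= 1).
Hypotheses (le_dk : (d <= k)%N) (rpow_k : rpow b (INR k) = INR d).

Lemma rpow_ndistinct_le_nshadow n S : (forall x, x \in S -> is_word k n x) ->
  rpow b (INR (ndistinct S)) <= INR (nshadow d S n).
Proof.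
elim: n S => [|n IHn] S word_S.
  case: S word_S => [|x S] word_S; first by rewrite /= rpow0; lra.
  have x_nil : x = [::] by case/andP: (word_S x (mem_head _ _)) => /eqP/size0nil.
  subst x.
  have le_S1 : (ndistinct ([::] :: S) <= 1)%N.
    apply: (uniq_leq_size (s2 := [:: [::]])) (undup_uniq _) _ => y.
    by rewrite mem_undup => /word_S /andP[/eqP/size0nil ->].
  apply: Rle_trans (rpow_le b_gt0 (pos_INR _) (INR_leq le_S1)) _.
  by rewrite /nshadow /= rpow1; lra.
pose u e := ndistinct (consistent_tails d e S).
pose M := \max_(d <= c < k) ndistinct (tails_at c S).
have le_Mu e : (M <= u e)%N.
  apply/bigmax_leqP_seq => c; rewrite mem_index_iota => /andP[le_dc _] _.
  by apply: ndistinct_tails_le; rewrite le_dc orbT.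
have le_S : (ndistinct S <= \sum_(0 <= e < d) u e + (k - d) * M)%N.
  apply: leq_trans (ndistinct_le_sum_tails word_S) _.
  rewrite (@big_cat_nat _ _ _ d) //= leq_add //.
    by apply: leq_sum => c _; apply: ndistinct_tails_le; rewrite eqxx.
  rewrite -sum_nat_const_nat big_seq [X in (_ <= X)%N]big_seq.
  by apply: leq_sum => c c_dk; apply: leq_bigmax_seq.
have le_SR := INR_leq le_S.
rewrite INR_addn INR_muln INR_subn // INR_sum in le_SR.
apply: Rle_trans (rpow_le b_gt0 (pos_INR _) le_SR) _.
apply: Rle_trans (rpow_sum_pad_le b_gt0 b_le1 rpow_k (INR_leq le_dk) (pos_INR M)
  (fun e _ => INR_leq (le_Mu e))) _.
rewrite (nshadow_cons d) => [|x /word_S /andP[/eqP ->]] //.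
rewrite INR_sum; apply: Rsum_le => e _; apply: IHn.
exact: is_word_consistent_tails.
Qed.

Lemma feasible_bound n m1 m2 : feasible2 (G_minus_clique d k) (G_empty k) n m1 m2 ->
  INR m1 * rpow b (INR m2) <= INR d ^ n.
Proof.
case=> _ [_ [E [dec1 dec2]]].
pose S a := [seq letters (E a a2) | a2 <- enum 'I_m2].
have ndistinct_S a : ndistinct (S a) = m2.
  rewrite /ndistinct undup_id /S; first by rewrite size_map size_enum_ord.
  rewrite map_inj_uniq ?enum_uniq // => a2 a2' eq_a2.
  case: (eqVneq a2 a2') => // /eqP /(dec2 a a) [t [neq _]].
  by case: neq; apply: val_inj; rewrite -!nth_letters eq_a2.
have shadow_S a : rpow b (INR m2) <= INR (nshadow d (S a) n).
  rewrite -(ndistinct_S a); apply: rpow_ndistinct_le_nshadow => x /mapP[a2 _ ->].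
  exact: is_word_letters.
have disjoint_S : (\sum_(a < m1) nshadow d (S a) n <= d ^ n)%N.
  rewrite -(size_cube d n); apply: sum_count_disjoint => z a a' /eqP ne.
  move=> /hasP[_ /mapP[a2 _ ->] z_a] /hasP[_ /mapP[a2' _ ->] z_a'].
  have [t [neq /negP G1]] := dec1 a a' a2 a2' ne.
  have /andP[lt1 lt2] : (E a a2 t < d)%N && (E a' a2' t < d)%N.
    rewrite !ltnNge -negb_or; apply/negP => big; apply: G1.
    by rewrite /G_minus_clique big andbT; apply/eqP.
  have z_t : nth 0%N z t = val (E a a2 t).
    by rewrite (consistent_nth z_a) ?size_letters ?nth_letters.
  have z_t' : nth 0%N z t = val (E a' a2' t).
    by rewrite (consistent_nth z_a') ?size_letters ?nth_letters.
  by apply: neq; apply: val_inj; rewrite -z_t -z_t'.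
apply: Rle_trans (_ : _ <= INR (\sum_(a < m1) nshadow d (S a) n)) _.
  by rewrite -Rsum_const_ord INR_sum; apply: Rsum_le.
by rewrite -INR_expn; apply: INR_leq.
Qed.
End ShadowBound.

Lemma log2_gt0 x : 1 < x -> 0 < log2 x.
Proof.
move=> x_gt1; have := ln_increasing 1 x ltac:(lra) x_gt1; have := ln_lt_2.
by rewrite ln_1 /log2 => ? ?; apply: Rdiv_lt_0_compat; lra.
Qed.

Lemma cv_const c : Un_cv (fun _ => c) c.
Proof. by move=> eps eps_gt0; exists 0%N => n _; rewrite /Rdist Rminus_diag Rabs_R0. Qed.

Section RateBound.
Variables d k : nat.
Hypotheses (le2d : (2 <= d)%N) (le_dk : (d <= k)%N).

Let d_gt1 : 1 < INR d.
Proof. by have := INR_leq le2d; rewrite /=; lra. Qed.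

Let lnd_gt0 : 0 < ln (INR d).
Proof. by rewrite -ln_1; apply: ln_increasing; lra. Qed.

Let lnd_le_lnk : ln (INR d) <= ln (INR k).
Proof. by apply: ln_le (INR_leq le_dk); lra. Qed.

Let b := ln (INR d) / ln (INR k).

Let b_gt0 : 0 < b.
Proof. by apply: Rdiv_lt_0_compat; lra. Qed.

Let b_le1 : b <= 1.
Proof.
apply: (Rmult_le_reg_r (ln (INR k))); first lra.
by rewrite /b Rmult_1_l /Rdiv Rmult_assoc Rinv_l; lra.
Qed.

Let rpow_b_k : rpow b (INR k) = INR d.
Proof.
have k_gt0 : 0 < INR k by have := INR_leq le_dk; lra.
rewrite rpow_pos // /Rpower /b /Rdiv Rmult_assoc Rinv_l ?Rmult_1_r ?exp_ln //; lra.
Qed.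

Lemma feasible_log2_bound n m1 m2 :
  feasible2 (G_minus_clique d k) (G_empty k) n m1 m2 ->
  log2 (INR m1) * log2 (INR k) + log2 (INR m2) * log2 (INR d)
  <= INR n * (log2 (INR d) * log2 (INR k)).
Proof.
move=> feas; have := feasible_bound b_gt0 b_le1 le_dk rpow_b_k feas.
case: feas => m1_gt0 [m2_gt0 _].
have m1R : 0 < INR m1 by apply/lt_0_INR/ltP.
have m2R : 0 < INR m2 by apply/lt_0_INR/ltP.
rewrite rpow_pos // => bound.
have pos : 0 < INR m1 * Rpower (INR m2) b by apply: Rmult_lt_0_compat; [|apply: exp_pos].
have := ln_le pos bound; rewrite ln_mult ?ln_Rpower ?ln_pow; try lra; last exact: exp_pos.
have ln2_gt0 : 0 < ln 2 by have := ln_lt_2; lra.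
have c_ge0 : 0 <= ln (INR k) / (ln 2 * ln 2).
  by apply: Rmult_le_pos; [lra | left; apply: Rinv_0_lt_compat; nra].
move=> /(Rmult_le_compat_r _ _ _ c_ge0).
have lnk_gt0 : 0 < ln (INR k) by lra.
rewrite (_ : INR n * ln (INR d) * _ = INR n * (log2 (INR d) * log2 (INR k))); last first.
  by rewrite /log2; field; lra.
rewrite (_ : (ln (INR m1) + b * ln (INR m2)) * _
  = log2 (INR m1) * log2 (INR k) + log2 (INR m2) * log2 (INR d)) //.
by rewrite /log2 /b; field; lra.
Qed.

Lemma rate_feasible_bound R1 R2 : rate_feasible2 (G_minus_clique d k) (G_empty k) R1 R2 ->
  R1 * log2 (INR k) + R2 * log2 (INR d) <= log2 (INR d) * log2 (INR k).
Proof.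
case=> m1 [m2 [feas [cv1 cv2]]].
have Ld := log2_gt0 d_gt1.
have Lk : 0 < log2 (INR k) by apply: log2_gt0; have := INR_leq le_dk; lra.
have cv := CV_plus _ _ _ _ (CV_mult _ _ _ _ cv1 (cv_const (log2 (INR k))))
  (CV_mult _ _ _ _ cv2 (cv_const (log2 (INR d)))).
eapply Rle_cv_lim; [move=> n /= | exact: cv | exact: cv_const].
have := feasible_log2_bound (feas n).
case: n => [|n] bound.
  by rewrite /Rdiv /= Rinv_0 !Rmult_0_r !Rmult_0_l; nra.
have n_gt0 : 0 < INR n.+1 by apply: lt_0_INR; apply/ltP.
rewrite (_ : _ + _ = (log2 (INR (m1 n.+1)) * log2 (INR k)
  + log2 (INR (m2 n.+1)) * log2 (INR d)) / INR n.+1); last by field; lra.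
apply: (Rmult_le_reg_r (INR n.+1)) => //.
by rewrite /Rdiv Rmult_assoc Rinv_l; lra.
Qed.
End RateBound.

Definition floor_nat (x : R) : nat := Z.to_nat (Int_part x).

Lemma floor_nat_bounds x : 0 <= x -> INR (floor_nat x) <= x < INR (floor_nat x) + 1.
Proof.
move=> x_ge0; have [le_x gt_x] := base_Int_part x.
have Int_gt : (-1 < Int_part x)%Z by apply: lt_IZR; lra.
rewrite /floor_nat INR_IZR_INZ Z2Nat.id; [lra | lia].
Qed.

Lemma Un_cv_of_err_le (u : nat -> R) l C :
  (forall n, (0 < n)%N -> Rabs (u n - l) <= C / INR n) -> Un_cv u l.
Proof.
move=> err eps eps_gt0; have [N N_eps] := INR_archimed eps C eps_gt0.
exists N.+1 => n /leP le_Nn; rewrite /Rdist.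
have n_gt0 : (0 < n)%N := leq_trans (ltn0Sn N) le_Nn.
have le_Nn' : INR N <= INR n := INR_leq (ltnW le_Nn).
have n_pos : 0 < INR n by apply/lt_0_INR/ltP.
apply: Rle_lt_trans (err n n_gt0) _.
apply: (Rmult_lt_reg_r (INR n)) => //; rewrite /Rdiv Rmult_assoc Rinv_l; nra.
Qed.

Lemma cv_log2_expn m (e : nat -> nat) x : (0 < m)%N ->
  (forall n, Rabs (INR (e n) - x * INR n) <= 1) ->
  Un_cv (fun n => log2 (INR (m ^ e n)) / INR n) (x * log2 (INR m)).
Proof.
move=> m_gt0 near_e; apply: (Un_cv_of_err_le (C := log2 (INR m))) => n n_gt0.
have m_pos : 0 < INR m by apply/lt_0_INR/ltP.
have n_pos : 0 < INR n by apply/lt_0_INR/ltP.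
have ln2_pos : 0 < ln 2 by have := ln_lt_2; lra.
have L_ge0 : 0 <= log2 (INR m) / INR n.
  apply: Rmult_le_pos; last by left; apply: Rinv_0_lt_compat.
  apply: Rmult_le_pos; last by left; apply: Rinv_0_lt_compat.
  by rewrite -ln_1; apply: ln_le; [lra | apply: (INR_leq m_gt0)].
have -> : log2 (INR (m ^ e n)) / INR n - x * log2 (INR m)
    = (INR (e n) - x * INR n) * (log2 (INR m) / INR n).
  by rewrite INR_expn /log2 ln_pow //; field; lra.
rewrite Rabs_mult (Rabs_pos_eq _ L_ge0).
have := Rabs_pos (INR (e n) - x * INR n); have := near_e n; nra.
Qed.

Lemma rate_feasible_split d k alpha : (0 < d)%N -> (d <= k)%N -> 0 <= alpha <= 1 ->
  rate_feasible2 (G_minus_clique d k) (G_empty k)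
    (alpha * log2 (INR d)) ((1 - alpha) * log2 (INR k)).
Proof.
move=> d_gt0 le_dk alpha01; pose a n := floor_nat (alpha * INR n).
have a_bounds n : INR (a n) <= alpha * INR n < INR (a n) + 1.
  by apply: floor_nat_bounds; apply: Rmult_le_pos; [lra | apply: pos_INR].
have le_an n : (a n <= n)%N.
  apply/leP/INR_le; have := a_bounds n; have := pos_INR n; nra.
exists (fun n => d ^ a n)%N, (fun n => k ^ (n - a n))%N; split.
  by move=> n; apply: feasible_split.
split; [apply: cv_log2_expn | apply: cv_log2_expn (leq_trans d_gt0 le_dk) _] => // n.
  by have := a_bounds n => ?; apply: Rabs_le; lra.
by rewrite INR_subn //; have := a_bounds n => ?; apply: Rabs_le; lra.
Qed.

Theorem theorem7 (d k : nat) (hd : (2 <= d)%N) (hdk : (d <= k)%N)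
  (alpha : R) (ha0 : Rle 0 alpha) (ha1 : Rle alpha 1) :
  rate_optimal2 (G_minus_clique d k) (G_empty k)
    (Rmult alpha (log2 (INR d))) (Rmult (Rminus 1 alpha) (log2 (INR k))).
Proof.
have d_gt1 : 1 < INR d by have := INR_leq hd; rewrite /=; lra.
have Ld := log2_gt0 d_gt1.
have Lk : 0 < log2 (INR k) by apply: log2_gt0; have := INR_leq hdk; lra.
split; first exact: rate_feasible_split (ltnW hd) hdk (conj ha0 ha1).
split=> -[R' [gt_R' /(rate_feasible_bound hd hdk)]]; nra.
Qed.
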